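(* Assume the setting in the context, with $0<\lambda<\eta<1$. Then $\lim_{k\to\infty}\|z_k\|=0$.
   Context: Let $g:\mathbb{R}^n\to\mathbb{R}$, $h:\mathbb{R}^n\times\mathbb{R}^d\to\mathbb{R}$ satisfy: (A1) $h$ is twice differentiable in $x$, for each $\theta$ there are $0<\mu(\theta)\le L(\theta)$ with $\mu(\theta)I\preceq\nabla_x^2h(x,\theta)\preceq L(\theta)I$ for all $x$, and $\nabla_xh,\nabla^2_xh$ are continuous in $\theta$; (A2) $\nabla_x^2h$ is $L_H$-Lipschitz in $x$ and $\nabla^2_{x\theta}h$ is $L_J$-Lipschitz in $x$, uniformly in $\theta$. Let $\hat{x}(\theta)=\arg\min_xh(x,\theta)$, $f(\theta)=g(\hat{x}(\theta))$. (B) $f$ is continuously differentiable with $L_{\nabla f}$-Lipschitz gradient, $g$ continuously differentiable with $L_{\nabla g}$-Lipschitz gradient, $L_{\nabla f},L_{\nabla g}>0$, $g$ bounded below. Fix $\beta_0>0$, $0<\underline{\rho}<1<\overline{\rho}$, $\lambda<\eta$. Consider sequences $\theta_k\in\mathbb{R}^d$, $z_k\in\mathbb{R}^d\setminus\{0\}$, $\epsilon_k\ge0$, $\tilde{x}_k\in\mathbb{R}^n$ with $\|\tilde{x}_k-\hat{x}(\theta_k)\|\le\epsilon_k$, $\alpha_k,\beta_k>0$, with $\theta_{k+1}=\theta_k-\alpha_kz_k$ and $\|z_k-\nabla f(\theta_k)\|\le(1-\eta)\|z_k\|$ for all $k$. Set $w_k=\|\nabla g(\tilde{x}_k)\|+\|\nabla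 g(\tilde{x}_{k+1})\|$, $\bar{\epsilon}_k=\max\{\epsilon_k,\epsilon_{k+1}\}$, $\hat{s}_k=\sqrt{(\eta-\lambda)^2-4L_{\nabla f}(w_k\bar{\epsilon}_k+L_{\nabla g}\bar{\epsilon}_k^2)/\|z_k\|^2}$ (assumed real), $\underline{\alpha}_k=(\eta-\lambda-\hat{s}_k)/L_{\nabla f}$, $\overline{\alpha}_k=(\eta-\lambda+\hat{s}_k)/L_{\nabla f}$. Assume for every $k$: $\alpha_k=\underline{\rho}^{i_k}\beta_k$ where $i_k$ is the smallest nonnegative integer with $\underline{\rho}^{i_k}\beta_k\in[\underline{\alpha}_k,\overline{\alpha}_k]$; if $i_k>0$ then $\alpha_k>\underline{\rho}\,\overline{\alpha}_k$; and $\beta_{k+1}=\overline{\rho}\alpha_k$. *)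

From mathcomp Require Import all_boot all_order all_algebra.
From mathcomp Require Import all_classical all_reals all_analysis.
Import Order.TTheory GRing.Theory Num.Theory.
Import numFieldNormedType.Exports.
Set Implicit Arguments. Unset Strict Implicit. Unset Printing Implicit Defensive.
Local Open Scope ring_scope.

Section Defs.
Context {R : realType}.

Definition enorm {n : nat} (v : 'rV[R]_n) : R := Num.sqrt (\sum_i (v 0 i) ^+ 2).
Definition dotv {n : nat} (u v : 'rV[R]_n) : R := \sum_i u 0 i * v 0 i.
Definition ebasis {n : nat} (i : 'I_n) : 'rV[R]_n := delta_mx 0 i.

(* action of an m x k matrix on a vector of R^k (as row vectors): A w *)
Definition mxop {m k : nat} (A : 'M[R]_(m, k)) (w : 'rV[R]_k) : 'rV[R]_m := w *m A^T.

Definition grad {n : nat} (f : 'rV[R]_n -> R) (x : 'rV[R]_n) : 'rV[R]_n :=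
  \row_i ('D_(ebasis i) f x).
Definition hess {n : nat} (f : 'rV[R]_n -> R) (x : 'rV[R]_n) : 'M[R]_n :=
  \matrix_(i, j) ('D_(ebasis j) (fun y => 'D_(ebasis i) f y) x).

Definition gradx {n d : nat} (h : 'rV[R]_n -> 'rV[R]_d -> R) x t : 'rV[R]_n :=
  grad (fun y => h y t) x.
Definition hessxx {n d : nat} (h : 'rV[R]_n -> 'rV[R]_d -> R) x t : 'M[R]_n :=
  hess (fun y => h y t) x.
Definition hessxt {n d : nat} (h : 'rV[R]_n -> 'rV[R]_d -> R) x t : 'M[R]_(n, d) :=
  \matrix_(i, j) ('D_(ebasis j) (fun s => 'D_(ebasis i) (fun y => h y s) x) t).

Definition assumption_A1 {n d : nat} (h : 'rV[R]_n -> 'rV[R]_d -> R) : Prop :=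
  (forall t x, differentiable (fun y => h y t) x /\
               differentiable (fun y => gradx h y t) x) /\
  (* mu(theta) I <= Hessian <= L(theta) I  (Loewner order) *)
  (forall t, exists mu L : R, 0 < mu /\ mu <= L /\
     forall x v, mu * enorm v ^+ 2 <= dotv v (mxop (hessxx h x t) v)
                 /\ dotv v (mxop (hessxx h x t) v) <= L * enorm v ^+ 2) /\
  (forall x, continuous (fun t => gradx h x t)) /\
  (forall x, continuous (fun t => hessxx h x t)).

(* (A2): Lipschitz in x (w.r.t. the operator norm induced by the Euclidean
   norms), uniformly in theta *)
Definition assumption_A2 {n d : nat} (h : 'rV[R]_n -> 'rV[R]_d -> R)
    (LH LJ : R) : Prop :=
  (forall t x y (v : 'rV[R]_n),
     enorm (mxop (hessxx h x t - hessxx h y t) v) <= LH * enorm (x - y) * enorm v) /\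
  (forall x t, differentiable (fun s => gradx h x s) t) /\
  (forall t x y (w : 'rV[R]_d),
     enorm (mxop (hessxt h x t - hessxt h y t) w) <= LJ * enorm (x - y) * enorm w).

Definition C1_lipgrad {m : nat} (f : 'rV[R]_m -> R) (Lf : R) : Prop :=
  (forall x, differentiable f x) /\ continuous (grad f) /\
  (forall x y, enorm (grad f x - grad f y) <= Lf * enorm (x - y)).

(* xhat theta is a (hence, under A1, the unique) minimizer of h(., theta) *)
Definition is_argmin_map {n d : nat} (h : 'rV[R]_n -> 'rV[R]_d -> R)
    (xhat : 'rV[R]_d -> 'rV[R]_n) : Prop :=
  forall t x, h (xhat t) t <= h x t.

End Defs.

(* Write f := g o xhat.  Since |z_k - grad f(theta_k)| <= (1 - eta) |z_k|, we
   have <grad f(theta_k), z_k> >= eta |z_k|^2.  As 0 <= shat_k <= eta - lam, the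
   upper end ahi_k of the acceptance interval lies in
   [(eta - lam) / Lf, 2 (eta - lam) / Lf], so the descent lemma gives
   f(theta_(k+1)) <= f(theta_k) - lam alpha_k |z_k|^2, and alpha_k stays above a
   positive constant: either no backtracking occurred and
   alpha_k = rho_hi alpha_(k-1), or alpha_k > rho_lo ahi_k.  As f is bounded
   below, sum_k |z_k|^2 is finite, hence z_k -> 0. *)

From mathcomp Require Import all_boot all_order all_algebra.
From mathcomp Require Import all_classical all_reals all_analysis.
From mathcomp Require Import ring lra.
Import Order.TTheory GRing.Theory Num.Theory.
Import numFieldNormedType.Exports.
Set Implicit Arguments. Unset Strict Implicit. Unset Printing Implicit Defensive.
Local Open Scope classical_set_scope.
Local Open Scope ring_scope.

Section Euclidean.
Context {R : realType} {d : nat}.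
Implicit Types u v : 'rV[R]_d.

Lemma enorm_ge0 v : 0 <= enorm v.
Proof. exact: sqrtr_ge0. Qed.

Lemma enorm_sqr v : enorm v ^+ 2 = dotv v v.
Proof.
rewrite sqr_sqrtr; last by apply: sumr_ge0 => i _; apply: sqr_ge0.
by apply: eq_bigr => i _; rewrite expr2.
Qed.

Lemma enorm_eq0 v : enorm v = 0 -> v = 0.
Proof.
move=> /eqP; rewrite sqrtr_eq0 => sum_le0; apply/rowP => i; rewrite mxE.
have sqr_entry_ge0 j : true -> 0 <= v 0 j ^+ 2 by move=> _; apply: sqr_ge0.
have sum0 : \sum_j v 0 j ^+ 2 = 0.
  by apply/eqP; rewrite eq_le sum_le0 sumr_ge0.
by apply/eqP; rewrite -sqrf_eq0 (psumr_eq0P sqr_entry_ge0 sum0).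
Qed.

Lemma enormZ c v : enorm (c *: v) = `|c| * enorm v.
Proof.
rewrite /enorm -sqrtr_sqr -sqrtrM ?sqr_ge0 // mulr_sumr.
by congr Num.sqrt; apply: eq_bigr => i _; rewrite mxE exprMn.
Qed.

Lemma dotv0l v : dotv 0 v = 0.
Proof. by rewrite /dotv big1 // => i _; rewrite mxE mul0r. Qed.

Lemma dotvC u v : dotv u v = dotv v u.
Proof. by apply: eq_bigr => i _; rewrite mulrC. Qed.

Lemma dotvBl u u' v : dotv (u - u') v = dotv u v - dotv u' v.
Proof. by rewrite /dotv -sumrB; apply: eq_bigr => i _; rewrite !mxE mulrBl. Qed.

Lemma dotvZr c u v : dotv u (c *: v) = c * dotv u v.
Proof. by rewrite /dotv mulr_sumr; apply: eq_bigr => i _; rewrite mxE mulrCA. Qed.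

(* Expanding [0 <= sum_i (B u_i - A v_i)^2] gives [0 <= 2AB (AB - <u, v>)]. *)
Lemma cauchy_schwarz u v : dotv u v <= enorm u * enorm v.
Proof.
have [/enorm_eq0->|Au] := eqVneq (enorm u) 0.
  by rewrite dotv0l mulr_ge0 ?enorm_ge0.
have [/enorm_eq0->|Bv] := eqVneq (enorm v) 0.
  by rewrite dotvC dotv0l mulr_ge0 ?enorm_ge0.
set A := enorm u in Au *; set B := enorm v in Bv *.
have AB_gt0 : 0 < A * B by rewrite mulr_gt0 // lt_def ?Au ?Bv ?enorm_ge0.
have : 0 <= \sum_i (B * u 0 i - A * v 0 i) ^+ 2.
  by apply: sumr_ge0 => i _; apply: sqr_ge0.
have -> : \sum_i (B * u 0 i - A * v 0 i) ^+ 2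
    = B ^+ 2 * dotv u u - 2 * (A * B) * dotv u v + A ^+ 2 * dotv v v.
  rewrite /dotv !mulr_sumr -!sumrB -big_split /=.
  by apply: eq_bigr => i _; ring.
rewrite -!enorm_sqr -/A -/B => expand_ge0.
have : 0 <= 2 * (A * B) * (A * B - dotv u v) by lra.
by rewrite pmulr_rge0 ?subr_ge0 // mulr_gt0.
Qed.

Lemma dotv_ge_rel_error (eta : R) u v :
  enorm (v - u) <= (1 - eta) * enorm v -> eta * enorm v ^+ 2 <= dotv u v.
Proof.
move=> rel_err.
have := cauchy_schwarz (v - u) v.
rewrite dotvBl -enorm_sqr dotvC.
have := ler_wpM2r (enorm_ge0 v) rel_err.
nra.
Qed.

End Euclidean.

Section LipschitzGradient.
Context {R : realType} {d : nat}.
Variables (f : 'rV[R]_d -> R) (L : R).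
Hypothesis f_diff : forall x, differentiable f x.
Hypothesis grad_lip : forall x y, enorm (grad f x - grad f y) <= L * enorm (x - y).

Lemma derive_grad (x v : 'rV[R]_d) : 'D_v f x = dotv (grad f x) v.
Proof.
rewrite deriveE // [X in 'd f x X](row_sum_delta v) linear_sum.
apply: eq_bigr => i _.
by rewrite linearZ /= mxE -deriveE // mulrC.
Qed.

Lemma is_derive_line (x v : 'rV[R]_d) (t : R) :
  is_derive t 1 (fun s : R => f (x + s *: v)) (dotv (grad f (x + t *: v)) v).
Proof.
have shift_line : (fun h : R => h^-1 *: (f (x + (h * 1 + t) *: v) - f (x + t *: v)))
    = (fun h : R => h^-1 *: (f (h *: v + (x + t *: v)) - f (x + t *: v))).
  by apply/funext => h; rewrite mulr1 scalerDl addrCA addrC.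
split; last by rewrite /derive /= shift_line -/(derive f _ v) derive_grad.
have := @diff_derivable _ _ _ _ _ v (f_diff (x + t *: v)).
by rewrite /derivable /= shift_line.
Qed.

(* Mean value theorem for [s |-> f (x + s v) - c s - K s^2] on [0, 1], whose
   derivative is nonpositive by the Lipschitz bound on [grad f]. *)
Lemma descent_lemma x y :
  f y <= f x + dotv (grad f x) (y - x) + L / 2 * enorm (y - x) ^+ 2.
Proof.
set v := y - x; set c := dotv (grad f x) v; set K := L / 2 * enorm v ^+ 2.
pose G : R -> R :=
  (fun s : R => f (x + s *: v)) - c \*: @id R - K \*: (@id R * @id R).
pose dG s := dotv (grad f (x + s *: v)) v - c - 2 * K * s.
have G_deriv (s : R) : is_derive s 1 G (dG s).
  have phi_deriv := is_derive_line x v s.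
  have id_deriv := is_derive_id s (1 : R).
  apply: is_derive_eq (is_deriveB (is_deriveB phi_deriv (is_deriveZ c id_deriv))
    (is_deriveZ K (is_deriveM id_deriv id_deriv))) _.
  rewrite /dG -[c%:A]/(c * 1) -[s%:A]/(s * 1) -[K *: _]/(K * _); ring.
have dG_le0 s : 0 <= s -> dG s <= 0.
  move=> s_ge0; rewrite /dG /c -dotvBl.
  have := cauchy_schwarz (grad f (x + s *: v) - grad f x) v.
  have := ler_wpM2r (enorm_ge0 v) (grad_lip (x + s *: v) x).
  rewrite addrAC subrr add0r enormZ ger0_norm //.
  have -> : 2 * K * s = L * (s * enorm v) * enorm v by rewrite /K; field.
  lra.
have G_cont : {within `[0, 1], continuous G}.
  apply: continuous_subspaceT => s; apply: differentiable_continuous.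
  exact/derivable1_diffP/(@ex_derive _ _ _ _ _ _ _ (G_deriv s)).
have G1 : G 1 = f y - c - K.
  by rewrite /G !fctE /= scale1r /v subrKC mulr1 -[c%:A]/(c * 1) mulr1 [K *: 1]mulr1.
have G0 : G 0 = f x.
  by rewrite /G !fctE /= scale0r addr0 mulr0 !scaler0 !subr0.
have [s] := MVT ltr01 (fun s _ => G_deriv s) G_cont.
rewrite in_itv /= => /andP[s_gt0 _] G_incr.
have := dG_le0 s (ltW s_gt0).
rewrite G1 G0 subr0 mulr1 in G_incr; lra.
Qed.

Lemma inexact_gradient_step_decrease (eta lam a : R) x z :
  0 <= a -> L * a <= 2 * (eta - lam) ->
  enorm (z - grad f x) <= (1 - eta) * enorm z ->
  f (x - a *: z) <= f x - lam * a * enorm z ^+ 2.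
Proof.
move=> a_ge0 La_le /dotv_ge_rel_error dotv_ge.
have := descent_lemma x (x - a *: z).
rewrite [x - _ - x]addrAC subrr add0r -scaleNr dotvZr enormZ normrN.
rewrite ger0_norm // exprMn.
have : 0 <= a * (dotv (grad f x) z - eta * enorm z ^+ 2).
  by rewrite mulr_ge0 // subr_ge0.
have : 0 <= a * enorm z ^+ 2 * (2 * (eta - lam) - L * a).
  by rewrite mulr_ge0 ?(mulr_ge0 a_ge0 (sqr_ge0 _)) ?subr_ge0.
nra.
Qed.

End LipschitzGradient.

Section Convergence.
Context {R : realType}.

Lemma sqrtrB_le (c t : R) : 0 <= c -> 0 <= t -> Num.sqrt (c ^+ 2 - t) <= c.
Proof.
move=> c_ge0 t_ge0; have : c ^+ 2 - t <= c ^+ 2 by rewrite gerDl oppr_le0.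
by move/ler_wsqrtr; rewrite sqrtr_sqr ger0_norm.
Qed.

Lemma backtracking_step_ge (rho_lo rho_hi a : R) (alpha beta ahi : nat -> R) :
  0 <= rho_lo -> 1 <= rho_hi -> (forall k, 0 <= alpha k) ->
  (forall k, a <= ahi k) -> (forall k, beta k.+1 = rho_hi * alpha k) ->
  (forall k, alpha k = beta k \/ rho_lo * ahi k < alpha k) ->
  forall k, Num.min (alpha 0%N) (rho_lo * a) <= alpha k.
Proof.
move=> rlo_ge0 rhi_ge1 alpha_ge0 ahi_ge beta_next accepted.
elim=> [|k IH]; first by rewrite ge_min lexx.
case: (accepted k.+1) => [->|ahi_lt].
  by rewrite beta_next (le_trans IH) // ler_peMl.
by rewrite ge_min (le_trans (ler_wpM2l rlo_ge0 (ahi_ge k.+1)) (ltW ahi_lt)) orbT.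
Qed.

Lemma sqr_cvg0 (u : nat -> R) :
  (forall k, 0 <= u k) -> (fun k => u k ^+ 2) @ \oo --> 0 -> u @ \oo --> 0.
Proof.
move=> u_ge0 usq_to0.
have -> : u = Num.sqrt \o (fun k => u k ^+ 2).
  by apply/funext => k /=; rewrite sqrtr_sqr ger0_norm.
by rewrite -sqrtr0; apply: continuous_cvg usq_to0; apply: sqrt_continuous.
Qed.

Lemma sufficient_decrease_cvg0 (F a u : nat -> R) (c m : R) :
  0 < c -> (forall k, c <= a k) -> (forall k, 0 <= u k) ->
  (forall k, m <= F k) -> (forall k, F k.+1 <= F k - a k * u k) ->
  u @ \oo --> 0.
Proof.
move=> c_gt0 a_ge u_ge0 F_ge F_decr.
have partial_sum_le k : c * series u k <= F 0%N - F k.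
  elim: k => [|k IH]; first by rewrite /series /= big_geq // mulr0 subrr.
  rewrite /series /= big_nat_recr //= mulrDr.
  have := F_decr k; have := ler_wpM2r (u_ge0 k) (a_ge k).
  rewrite /series /= in IH; lra.
apply: cvg_series_cvg_0; apply: nondecreasing_is_cvgn.
  exact: nondecreasing_series.
exists ((F 0%N - m) / c) => _ [k _ <-].
rewrite ler_pdivlMr // mulrC.
have := partial_sum_le k; have := F_ge k; lra.
Qed.

End Convergence.

Theorem theorem3p15 (R : realType) (n d : nat)
  (g : 'rV[R]_n -> R) (h : 'rV[R]_n -> 'rV[R]_d -> R)
  (xhat : 'rV[R]_d -> 'rV[R]_n) (LH LJ Lf Lg : R)
  (beta0 rho_lo rho_hi lam eta : R)
  (theta z : nat -> 'rV[R]_d) (eps : nat -> R) (xt : nat -> 'rV[R]_n)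
  (alpha beta : nat -> R) :
  (* (A1), (A2) *)
  assumption_A1 h -> assumption_A2 h LH LJ ->
  is_argmin_map h xhat ->
  (* (B), with f = g o xhat *)
  C1_lipgrad (fun t => g (xhat t)) Lf -> C1_lipgrad g Lg ->
  0 < Lf -> 0 < Lg ->
  (exists m : R, forall x, m <= g x) ->
  (* parameters *)
  0 < beta0 -> 0 < rho_lo -> rho_lo < 1 -> 1 < rho_hi ->
  0 < lam -> lam < eta -> eta < 1 ->
  (* sequences *)
  (forall k, z k != 0) ->
  (forall k, 0 <= eps k) ->
  (forall k, enorm (xt k - xhat (theta k)) <= eps k) ->
  (forall k, 0 < alpha k) -> (forall k, 0 < beta k) ->
  beta 0%N = beta0 ->
  (forall k, theta k.+1 = theta k - alpha k *: z k) ->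
  (forall k, enorm (z k - grad (fun t => g (xhat t)) (theta k))
               <= (1 - eta) * enorm (z k)) ->
  let w k := enorm (grad g (xt k)) + enorm (grad g (xt k.+1)) in
  let ebar k := Num.max (eps k) (eps k.+1) in
  let disc k := (eta - lam) ^+ 2
      - 4 * Lf * (w k * ebar k + Lg * ebar k ^+ 2) / enorm (z k) ^+ 2 in
  let shat k := Num.sqrt (disc k) in
  let alo k := (eta - lam - shat k) / Lf in
  let ahi k := (eta - lam + shat k) / Lf in
  (* shat_k is assumed real *)
  (forall k, 0 <= disc k) ->
  (* backtracking rule *)
  (forall k, exists i : nat,
     [/\ alpha k = rho_lo ^+ i * beta k,
         alo k <= rho_lo ^+ i * beta k <= ahi k,
         (forall j : nat, (j < i)%N ->
            ~ (alo k <= rho_lo ^+ j * beta k <= ahi k)) &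
         ((0 < i)%N -> rho_lo * ahi k < alpha k)]) ->
  (forall k, beta k.+1 = rho_hi * alpha k) ->
  (fun k => enorm (z k)) @ \oo --> (0 : R).
Proof.
move=> _ _ _ [F_diff [_ F_lip]] _ Lf_gt0 Lg_gt0 [m g_ge] _ rlo_gt0 _ rhi_gt1
  lam_gt0 lam_lt_eta _ _ eps_ge0 _ alpha_gt0 _ _ theta_next z_rel_err
  w ebar disc shat alo ahi _ backtrack beta_next.
have eta_lam_ge0 : 0 <= eta - lam by rewrite subr_ge0 ltW.
have shat_le k : shat k <= eta - lam.
  have w_ge0 : 0 <= w k by rewrite addr_ge0 ?enorm_ge0.
  have ebar_ge0 : 0 <= ebar k by rewrite le_max eps_ge0.
  have [Lf_ge0 Lg_ge0] := (ltW Lf_gt0, ltW Lg_gt0).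
  apply: sqrtrB_le => //.
  by rewrite divr_ge0 ?sqr_ge0 ?mulr_ge0 ?addr_ge0 ?mulr_ge0 ?sqr_ge0.
have Lf_alpha_le k : Lf * alpha k <= 2 * (eta - lam).
  have [i [-> /andP[_ /(ler_wpM2l (ltW Lf_gt0))]]] := backtrack k.
  rewrite /ahi [Lf * (_ / _)]mulrC divfK ?gt_eqF //.
  by have := shat_le k; lra.
have ahi_ge k : (eta - lam) / Lf <= ahi k.
  by rewrite ler_pM2r ?invr_gt0 // lerDl sqrtr_ge0.
have accepted k : alpha k = beta k \/ rho_lo * ahi k < alpha k.
  have [[|i] [-> _ _ lt_alpha]] := backtrack k; last by right; exact: lt_alpha.
  by left; rewrite expr0 mul1r.
have alpha_ge := backtracking_step_ge (ltW rlo_gt0) (ltW rhi_gt1)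
  (fun k => ltW (alpha_gt0 k)) ahi_ge beta_next accepted.
apply: sqr_cvg0 => [k|]; first exact: enorm_ge0.
apply: (sufficient_decrease_cvg0 (a := fun k => lam * alpha k)
  (c := lam * Num.min (alpha 0%N) (rho_lo * ((eta - lam) / Lf)))
  _ _ _ (fun k => g_ge (xhat (theta k)))).
- by rewrite mulr_gt0 // lt_min alpha_gt0 mulr_gt0 ?divr_gt0 ?subr_gt0.
- by move=> k; rewrite ler_pM2l.
- by move=> k; apply: sqr_ge0.
- move=> k; rewrite theta_next.
  by apply: (inexact_gradient_step_decrease F_diff F_lip) => //; exact: ltW.
Qed.
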